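(* Let $\tau>0$, $\varepsilon>0$ and $A\ge\frac1{16}$. Let $\phi^0,\phi^1\in\mathcal C_{\rm per}$ with $\overline{\phi^0}=\overline{\phi^1}=0$, and let $(\phi^k)_{k\ge0}$ be the sequence generated by the scheme below. Let $C_1>0$ be a constant such that $\|\Delta_h\psi\|_2^2\ge C_1\|\psi\|_{H_h^2}^2$ for all $\psi\in\mathcal C_{\rm per}$ with $\overline\psi=0$. Set $C_0=\tilde F_h(\phi^1,\phi^0)$. Then for every $k\ge1$, $$\|\phi^k\|_{H_h^2}\le\sqrt{\frac{2(C_0+|\Omega|)}{C_1\varepsilon^2}}.$$
   Context: Let $L>0$, $N$ a positive integer, $h=L/N$, $\Omega=(0,L)^2$, $|\Omega|=L^2$. $\mathcal C_{\rm per}$ is the space of real grid functions $\phi_{i,j}$ ($i,j\in\mathbb Z$), $N$-periodic in each index, with mean $\overline\phi=\frac{h^2}{L^2}\sum_{i,j=1}^N\phi_{i,j}$. Vertex functions $g_{i+\frac12,j+\frac12}$ are periodic. Norms: $\|\phi\|_p^p=h^2\sum_{i,j=1}^N|\phi_{i,j}|^p$. Standard operators: - $D_x\phi_{i+\frac12,j}=(\phi_{i+1,j}-\phi_{i,j})/h$ and $D_y\phi_{i,j+\frac12}=(\phi_{i,j+1}-\phi_{i,j})/h$. - $\|\nabla_h\phi\|_2^2=h^2\sum_{i,j=1}^N[(D_x\phi_{i+\frac12,j})^2+(D_y\phi_{i,j+\frac12})^2]$. - $\Delta_h\phi_{i,j}=h^{-2}(\phi_{i+1,j}+\phi_{i-1,j}+\phi_{i,j+1}+\phi_{i,j-1}-4\phi_{i,j})$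 and $\Delta_h^2=\Delta_h\Delta_h$. - $\|\phi\|_{H_h^2}^2=\|\phi\|_2^2+\|\nabla_h\phi\|_2^2+\|\Delta_h\phi\|_2^2$. Center-to-vertex differences: - $\mathfrak D_x\phi_{i+\frac12,j+\frac12}=\frac1{2h}(\phi_{i+1,j+1}-\phi_{i,j+1}+\phi_{i+1,j}-\phi_{i,j})$. - $\mathfrak D_y\phi_{i+\frac12,j+\frac12}=\frac1{2h}(\phi_{i+1,j+1}-\phi_{i+1,j}+\phi_{i,j+1}-\phi_{i,j})$. - $|\nabla_h^{\mathsf v}\phi|^2=(\mathfrak D_x\phi)^2+(\mathfrak D_y\phi)^2$ and $\|\nabla_h^{\mathsf v}\phi\|_p^p=h^2\sum_{i,j=1}^N|\nabla_h^{\mathsf v}\phi|^p_{i+\frac12,j+\frac12}$. Vertex-to-center differences: - $\mathfrak d_xg_{i,j}=\frac1{2h}(g_{i+\frac12,j+\frac12}-g_{i-\frac12,j+\frac12}+g_{i+\frac12,j-\frac12}-g_{i-\frac12,j-\frac12})$. - $\mathfrak d_yg_{i,j}=\frac1{2h}(g_{i+\frac12,j+\frac12}-g_{i+\frac12,j-\frac12}+g_{i-\frac12,j+\frac12}-g_{i-\frac12,j-\frac12})$. Skew operators: - $\Delta_h^{\mathsf v}\phi=\mathfrak d_x\mathfrak D_x\phi+\mathfrak d_y\mathfrak D_y\phi$. - $\nabla_h^{\mathsf v}\cdot(|\nabla_h^{\mathsf v}\phi|^2\nabla_h^{\mathsf v}\phi)=\mathfrak d_x(r\mathfrak D_x\phi)+\mathfrak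 d_y(r\mathfrak D_y\phi)$ with $r=|\nabla_h^{\mathsf v}\phi|^2$. Energies: $$F_h(\phi)=\tfrac14\|\nabla_h^{\mathsf v}\phi\|_4^4-\tfrac12\|\nabla_h^{\mathsf v}\phi\|_2^2+\tfrac{\varepsilon^2}2\|\Delta_h\phi\|_2^2,$$ $$\tilde F_h(\phi,\psi)=F_h(\phi)+\tfrac1{4\tau}\|\phi-\psi\|_2^2+\tfrac12\|\nabla_h(\phi-\psi)\|_2^2.$$ Scheme: for $k\ge1$, $\phi^{k+1}\in\mathcal C_{\rm per}$ is the unique solution of $$\frac{3\phi^{k+1}-4\phi^k+\phi^{k-1}}{2\tau}=\nabla_h^{\mathsf v}\cdot(|\nabla_h^{\mathsf v}\phi^{k+1}|^2\nabla_h^{\mathsf v}\phi^{k+1})-\Delta_h^{\mathsf v}(2\phi^k-\phi^{k-1})-A\tau\Delta_h^2(\phi^{k+1}-\phi^k)-\varepsilon^2\Delta_h^2\phi^{k+1}.$$ *)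

From Stdlib Require Import Reals ZArith Lra.
Open Scope R_scope.

(* Grid functions phi_{i,j}, i,j in Z.  A vertex function
   g_{i+1/2,j+1/2} is represented by g i j. *)
Definition grid := Z -> Z -> R.

Definition periodic (N : nat) (f : grid) : Prop :=
  forall i j : Z, f (i + Z.of_nat N)%Z j = f i j /\ f i (j + Z.of_nat N)%Z = f i j.

Definition gsum (N : nat) (F : Z -> Z -> R) : R :=
  sum_f_R0 (fun a => sum_f_R0 (fun b => F (Z.of_nat a + 1)%Z (Z.of_nat b + 1)%Z) (N - 1)) (N - 1).

Definition mean (L h : R) (N : nat) (f : grid) : R := (h ^ 2 / L ^ 2) * gsum N f.

Definition norm2sq (h : R) (N : nat) (f : grid) : R := h ^ 2 * gsum N (fun i j => (f i j) ^ 2).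

Definition Dx (h : R) (f : grid) : grid := fun i j => (f (i + 1)%Z j - f i j) / h.  (* at (i+1/2, j) *)
Definition Dy (h : R) (f : grid) : grid := fun i j => (f i (j + 1)%Z - f i j) / h.  (* at (i, j+1/2) *)

Definition gradsq (h : R) (N : nat) (f : grid) : R :=
  h ^ 2 * gsum N (fun i j => (Dx h f i j) ^ 2 + (Dy h f i j) ^ 2).

Definition Lap (h : R) (f : grid) : grid := fun i j =>
  (f (i + 1)%Z j + f (i - 1)%Z j + f i (j + 1)%Z + f i (j - 1)%Z - 4 * f i j) / h ^ 2.

Definition Lap2 (h : R) (f : grid) : grid := Lap h (Lap h f).

Definition H2sq (h : R) (N : nat) (f : grid) : R :=
  norm2sq h N f + gradsq h N f + norm2sq h N (Lap h f).
Definition H2norm (h : R) (N : nat) (f : grid) : R := sqrt (H2sq h N f).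

(* center-to-vertex differences; value at vertex (i+1/2, j+1/2) *)
Definition DDx (h : R) (f : grid) : grid := fun i j =>
  (f (i + 1)%Z (j + 1)%Z - f i (j + 1)%Z + f (i + 1)%Z j - f i j) / (2 * h).
Definition DDy (h : R) (f : grid) : grid := fun i j =>
  (f (i + 1)%Z (j + 1)%Z - f (i + 1)%Z j + f i (j + 1)%Z - f i j) / (2 * h).

(* vertex-to-center differences; g i j stands for g_{i+1/2,j+1/2} *)
Definition ddx (h : R) (g : grid) : grid := fun i j =>
  (g i j - g (i - 1)%Z j + g i (j - 1)%Z - g (i - 1)%Z (j - 1)%Z) / (2 * h).
Definition ddy (h : R) (g : grid) : grid := fun i j =>
  (g i j - g i (j - 1)%Z + g (i - 1)%Z j - g (i - 1)%Z (j - 1)%Z) / (2 * h).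

Definition gradv_sq (h : R) (f : grid) : grid := fun i j =>
  (DDx h f i j) ^ 2 + (DDy h f i j) ^ 2.

Definition Lapv (h : R) (f : grid) : grid := fun i j =>
  ddx h (DDx h f) i j + ddy h (DDy h f) i j.

Definition divv (h : R) (f : grid) : grid := fun i j =>
  ddx h (fun a b => gradv_sq h f a b * DDx h f a b) i j
  + ddy h (fun a b => gradv_sq h f a b * DDy h f a b) i j.

Definition gradv4 (h : R) (N : nat) (f : grid) : R :=
  h ^ 2 * gsum N (fun i j => (gradv_sq h f i j) ^ 2).
Definition gradv2 (h : R) (N : nat) (f : grid) : R :=
  h ^ 2 * gsum N (fun i j => gradv_sq h f i j).

Definition Fh (h eps : R) (N : nat) (f : grid) : R :=
  / 4 * gradv4 h N f - / 2 * gradv2 h N f + eps ^ 2 / 2 * norm2sq h N (Lap h f).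

Definition gdiff (f g : grid) : grid := fun i j => f i j - g i j.

Definition Ftilde (h eps tau : R) (N : nat) (f g : grid) : R :=
  Fh h eps N f + / (4 * tau) * norm2sq h N (gdiff f g) + / 2 * gradsq h N (gdiff f g).

Definition scheme_step (h eps tau A : R) (pkp1 pk pkm1 : grid) : Prop :=
  forall i j : Z,
    (3 * pkp1 i j - 4 * pk i j + pkm1 i j) / (2 * tau)
    = divv h pkp1 i j
      - Lapv h (fun a b => 2 * pk a b - pkm1 a b) i j
      - A * tau * Lap2 h (gdiff pkp1 pk) i j
      - eps ^ 2 * Lap2 h pkp1 i j.

From Pilot Require Import Defs.
From Stdlib Require Import Reals ZArith Lra Lia.
(* Stdlib's Reals also exports a [Dx]; the grid operator must shadow it. *)
Import Pilot.Defs.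
Open Scope R_scope.

(* Testing the scheme with the increment d = phi^(k+1) - phi^k and summing by parts, every
   term is bounded by a difference of energies: the nonlinear term by convexity of |p|^4/4,
   the surface term by convexity of eps^2 |Delta phi|^2 / 2, the explicitly extrapolated
   concave term by (2b - c)(a - b) <= a^2/2 - b^2/2 + (b - c)^2/2, and the BDF2 quotient by
   (3d - e) d >= 5/2 d^2 - 1/2 e^2.  The leftover ||grad d||^2 / 2 = -(Delta d, d) / 2 is
   dominated by ||d||^2 / tau + A tau ||Delta d||^2 as soon as A >= 1/16, so the modified
   energy Ftilde(phi^(k+1), phi^k) is nonincreasing.  The scheme conserves mass, so every
   phi^k has mean zero, and Ftilde >= eps^2/2 ||Delta phi||^2 - |Omega|/4 combined with the
   constant C1 yields the H^2 bound. *)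

Definition gint (h : R) (N : nat) (F : grid) : R := h ^ 2 * gsum N F.

Lemma per_cst N c : periodic N (fun _ _ => c).
Proof. now intros i j. Qed.

Lemma per_op1 N (op : R -> R) f : periodic N f -> periodic N (fun i j => op (f i j)).
Proof. intros Hf i j. destruct (Hf i j). cbv beta. split; congruence. Qed.

Lemma per_op2 N (op : R -> R -> R) f g : periodic N f -> periodic N g ->
  periodic N (fun i j => op (f i j) (g i j)).
Proof. intros Hf Hg i j. destruct (Hf i j), (Hg i j). cbv beta. split; congruence. Qed.

Lemma per_reindex N f p q : periodic N f ->
  (forall i, p (i + Z.of_nat N)%Z = (p i + Z.of_nat N)%Z) ->
  (forall j, q (j + Z.of_nat N)%Z = (q j + Z.of_nat N)%Z) ->
  periodic N (fun i j => f (p i) (q j)).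
Proof. intros Hf Hp Hq i j. cbv beta. rewrite Hp, Hq. apply Hf. Qed.

Ltac solve_periodic :=
  unfold Dx, Dy, DDx, DDy, ddx, ddy, Lap, Lap2, gradv_sq, gdiff, divv, Lapv; cbv beta;
  first [ assumption
        | apply per_cst
        | match goal with |- periodic _ (fun _ _ => _) =>
            first [ apply per_op2; solve_periodic
                  | apply per_op1; solve_periodic
                  | apply per_reindex; [solve_periodic | intros; lia | intros; lia] ] end ].

Section Periodic_sums.

Variable N : nat.
Hypothesis HN : (0 < N)%nat.

Definition period_sum (g : Z -> R) : R :=
  sum_f_R0 (fun b => g (Z.of_nat b + 1)%Z) (N - 1).

Lemma period_sum_ext g g' : (forall i, g i = g' i) -> period_sum g = period_sum g'.
Proof. intros H. apply sum_eq; intros; apply H. Qed.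

Lemma period_sum_shift1 g : (forall i, g (i + Z.of_nat N)%Z = g i) ->
  period_sum (fun i => g (i + 1)%Z) = period_sum g.
Proof.
  intros Hg. unfold period_sum.
  set (n := (N - 1)%nat).
  set (u := fun b : nat => g (Z.of_nat b + 1)%Z).
  transitivity (sum_f_R0 (fun b => u (S b)) n).
  { apply sum_eq; intros b _. unfold u. f_equal. lia. }
  assert (Hsplit := decomp_sum u (S n) ltac:(lia)). rewrite tech5 in Hsplit.
  assert (Hwrap : u (S n) = u 0%nat).
  { unfold u, n. rewrite <- (Hg (Z.of_nat 0 + 1)%Z). f_equal. lia. }
  simpl pred in Hsplit. lra.
Qed.

Lemma period_sum_shift g a : (forall i, g (i + Z.of_nat N)%Z = g i) ->
  period_sum (fun i => g (i + a)%Z) = period_sum g.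
Proof.
  intros Hg. induction a as [|a IH|a IH] using Z.peano_ind.
  - apply period_sum_ext; intros; f_equal; lia.
  - rewrite <- IH, <- (period_sum_shift1 (fun i => g (i + a)%Z)).
    + apply period_sum_ext; intros; f_equal; lia.
    + intros i. rewrite <- (Hg (i + a)%Z). f_equal. lia.
  - rewrite <- IH, <- (period_sum_shift1 (fun i => g (i + Z.pred a)%Z)).
    + apply period_sum_ext; intros; f_equal; lia.
    + intros i. rewrite <- (Hg (i + Z.pred a)%Z). f_equal. lia.
Qed.

Lemma gsum_shift F a b : periodic N F ->
  gsum N (fun i j => F (i + a)%Z (j + b)%Z) = gsum N F.
Proof.
  intros HF.
  change (period_sum (fun i => period_sum (fun j => F (i + a)%Z (j + b)%Z))
          = period_sum (fun i => period_sum (F i))).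
  rewrite <- (period_sum_shift (fun i => period_sum (F i)) a).
  - apply period_sum_ext; intros i.
    apply period_sum_shift; intros j; apply HF.
  - intros i. apply period_sum_ext; intros j; apply HF.
Qed.

Variable h : R.

Lemma gint_ext F G : (forall i j, F i j = G i j) -> gint h N F = gint h N G.
Proof.
  intros H. unfold gint, gsum. f_equal.
  apply sum_eq; intros; apply sum_eq; intros; apply H.
Qed.

Lemma gint_shift_eq F G a b : periodic N F ->
  (forall i j, G i j = F (i + a)%Z (j + b)%Z) -> gint h N G = gint h N F.
Proof.
  intros HF HG. unfold gint. rewrite <- (gsum_shift F a b HF).
  apply (gint_ext G (fun i j => F (i + a)%Z (j + b)%Z)); auto.
Qed.

Lemma gint_add F G :
  gint h N (fun i j => F i j + G i j) = gint h N (fun i j => F i j) + gint h N (fun i j => G i j).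
Proof.
  unfold gint, gsum. rewrite <- Rmult_plus_distr_l, <- sum_plus. f_equal.
  apply sum_eq; intros. apply sum_plus.
Qed.

Lemma gint_scal c F : gint h N (fun i j => c * F i j) = c * gint h N (fun i j => F i j).
Proof.
  assert (Hsum : gsum N (fun i j => c * F i j) = c * gsum N (fun i j => F i j)).
  { unfold gsum. rewrite scal_sum. apply sum_eq; intros.
    rewrite Rmult_comm, scal_sum. apply sum_eq; intros. ring. }
  unfold gint. rewrite Hsum. ring.
Qed.

Lemma gint_sub F G :
  gint h N (fun i j => F i j - G i j) = gint h N (fun i j => F i j) - gint h N (fun i j => G i j).
Proof.
  rewrite (gint_ext _ (fun i j => F i j + (-1) * G i j)) by (intros; ring).
  rewrite gint_add, gint_scal. ring.
Qed.

Lemma gint_nonneg F : (forall i j, 0 <= F i j) -> 0 <= gint h N F.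
Proof.
  intros H. unfold gint. apply Rmult_le_pos; [apply pow2_ge_0|].
  apply cond_pos_sum; intros; apply cond_pos_sum; intros; apply H.
Qed.

Lemma gint_const c : gint h N (fun _ _ => c) = (h * INR N) ^ 2 * c.
Proof.
  unfold gint, gsum. rewrite !sum_cte. replace (S (N - 1)) with N by lia. ring.
Qed.

End Periodic_sums.

Ltac gint_linear := repeat rewrite ?gint_add, ?gint_sub, ?gint_scal; cbv beta.
Ltac gint_linear_in H := repeat rewrite ?gint_add, ?gint_sub, ?gint_scal in H; cbv beta in H.
Ltac shift_arith := intros; cbv beta; repeat f_equal; lia.

Section Summation_by_parts.

Variables (N : nat) (h : R).
Hypothesis HN : (0 < N)%nat.

Lemma gint_ddx_mul g f : periodic N g -> periodic N f ->
  gint h N (fun i j => ddx h g i j * f i j) = - gint h N (fun i j => g i j * DDx h f i j).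
Proof.
  intros Hg Hf.
  assert (E1 : gint h N (fun i j => g (i - 1)%Z j * f i j)
             = gint h N (fun i j => g i j * f (i + 1)%Z j)).
  { apply (gint_shift_eq N HN h _ _ (-1) 0); [solve_periodic | shift_arith]. }
  assert (E2 : gint h N (fun i j => g i (j - 1)%Z * f i j)
             = gint h N (fun i j => g i j * f i (j + 1)%Z)).
  { apply (gint_shift_eq N HN h _ _ 0 (-1)); [solve_periodic | shift_arith]. }
  assert (E3 : gint h N (fun i j => g (i - 1)%Z (j - 1)%Z * f i j)
             = gint h N (fun i j => g i j * f (i + 1)%Z (j + 1)%Z)).
  { apply (gint_shift_eq N HN h _ _ (-1) (-1)); [solve_periodic | shift_arith]. }
  rewrite (gint_ext N h _ (fun i j => / (2 * h) * (g i j * f i j - g (i - 1)%Z j * f i j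
      + g i (j - 1)%Z * f i j - g (i - 1)%Z (j - 1)%Z * f i j)))
    by (intros; unfold ddx, Rdiv; ring).
  rewrite (gint_ext N h (fun i j => g i j * DDx h f i j) (fun i j => / (2 * h) *
      (g i j * f (i + 1)%Z (j + 1)%Z - g i j * f i (j + 1)%Z + g i j * f (i + 1)%Z j - g i j * f i j)))
    by (intros; unfold DDx, Rdiv; ring).
  gint_linear. rewrite E1, E2, E3. ring.
Qed.

Lemma gint_ddy_mul g f : periodic N g -> periodic N f ->
  gint h N (fun i j => ddy h g i j * f i j) = - gint h N (fun i j => g i j * DDy h f i j).
Proof.
  intros Hg Hf.
  assert (E1 : gint h N (fun i j => g (i - 1)%Z j * f i j)
             = gint h N (fun i j => g i j * f (i + 1)%Z j)).
  { apply (gint_shift_eq N HN h _ _ (-1) 0); [solve_periodic | shift_arith]. }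
  assert (E2 : gint h N (fun i j => g i (j - 1)%Z * f i j)
             = gint h N (fun i j => g i j * f i (j + 1)%Z)).
  { apply (gint_shift_eq N HN h _ _ 0 (-1)); [solve_periodic | shift_arith]. }
  assert (E3 : gint h N (fun i j => g (i - 1)%Z (j - 1)%Z * f i j)
             = gint h N (fun i j => g i j * f (i + 1)%Z (j + 1)%Z)).
  { apply (gint_shift_eq N HN h _ _ (-1) (-1)); [solve_periodic | shift_arith]. }
  rewrite (gint_ext N h _ (fun i j => / (2 * h) * (g i j * f i j - g i (j - 1)%Z * f i j
      + g (i - 1)%Z j * f i j - g (i - 1)%Z (j - 1)%Z * f i j)))
    by (intros; unfold ddy, Rdiv; ring).
  rewrite (gint_ext N h (fun i j => g i j * DDy h f i j) (fun i j => / (2 * h) *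
      (g i j * f (i + 1)%Z (j + 1)%Z - g i j * f (i + 1)%Z j + g i j * f i (j + 1)%Z - g i j * f i j)))
    by (intros; unfold DDy, Rdiv; ring).
  gint_linear. rewrite E1, E2, E3. ring.
Qed.

Lemma gint_ddx g : periodic N g -> gint h N (ddx h g) = 0.
Proof.
  intros Hg.
  rewrite (gint_ext N h _ (fun i j => ddx h g i j * (fun _ _ => 1) i j)) by (intros; ring).
  rewrite gint_ddx_mul by (auto using per_cst).
  rewrite (gint_ext N h _ (fun _ _ => 0)) by (intros; unfold DDx, Rdiv; ring).
  rewrite gint_const by exact HN. ring.
Qed.

Lemma gint_ddy g : periodic N g -> gint h N (ddy h g) = 0.
Proof.
  intros Hg.
  rewrite (gint_ext N h _ (fun i j => ddy h g i j * (fun _ _ => 1) i j)) by (intros; ring).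
  rewrite gint_ddy_mul by (auto using per_cst).
  rewrite (gint_ext N h _ (fun _ _ => 0)) by (intros; unfold DDy, Rdiv; ring).
  rewrite gint_const by exact HN. ring.
Qed.

Lemma gint_Lap_mul_sym F G : periodic N F -> periodic N G ->
  gint h N (fun i j => Lap h F i j * G i j) = gint h N (fun i j => F i j * Lap h G i j).
Proof.
  intros HF HG.
  assert (E1 : gint h N (fun i j => F (i + 1)%Z j * G i j)
             = gint h N (fun i j => F i j * G (i - 1)%Z j)).
  { apply (gint_shift_eq N HN h _ _ 1 0); [solve_periodic | shift_arith]. }
  assert (E2 : gint h N (fun i j => F (i - 1)%Z j * G i j)
             = gint h N (fun i j => F i j * G (i + 1)%Z j)).
  { apply (gint_shift_eq N HN h _ _ (-1) 0); [solve_periodic | shift_arith]. }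
  assert (E3 : gint h N (fun i j => F i (j + 1)%Z * G i j)
             = gint h N (fun i j => F i j * G i (j - 1)%Z)).
  { apply (gint_shift_eq N HN h _ _ 0 1); [solve_periodic | shift_arith]. }
  assert (E4 : gint h N (fun i j => F i (j - 1)%Z * G i j)
             = gint h N (fun i j => F i j * G i (j + 1)%Z)).
  { apply (gint_shift_eq N HN h _ _ 0 (-1)); [solve_periodic | shift_arith]. }
  rewrite (gint_ext N h _ (fun i j => / h ^ 2 * (F (i + 1)%Z j * G i j + F (i - 1)%Z j * G i j
      + F i (j + 1)%Z * G i j + F i (j - 1)%Z * G i j - 4 * (F i j * G i j))))
    by (intros; unfold Lap, Rdiv; ring).
  rewrite (gint_ext N h (fun i j => F i j * Lap h G i j) (fun i j => / h ^ 2 *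
      (F i j * G (i + 1)%Z j + F i j * G (i - 1)%Z j + F i j * G i (j + 1)%Z
       + F i j * G i (j - 1)%Z - 4 * (F i j * G i j))))
    by (intros; unfold Lap, Rdiv; ring).
  gint_linear. rewrite E1, E2, E3, E4. ring.
Qed.

Lemma gint_Lap g : periodic N g -> gint h N (Lap h g) = 0.
Proof.
  intros Hg.
  rewrite (gint_ext N h _ (fun i j => Lap h g i j * (fun _ _ => 1) i j)) by (intros; ring).
  rewrite gint_Lap_mul_sym by (auto using per_cst).
  rewrite (gint_ext N h _ (fun _ _ => 0)) by (intros; unfold Lap, Rdiv; ring).
  rewrite gint_const by exact HN. ring.
Qed.

Hypothesis Hh : h <> 0.

Lemma gint_Lap_mul F G : periodic N F -> periodic N G ->
  gint h N (fun i j => Lap h F i j * G i j) =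
  - gint h N (fun i j => Dx h F i j * Dx h G i j + Dy h F i j * Dy h G i j).
Proof.
  intros HF HG.
  assert (E1 : gint h N (fun i j => F (i + 1)%Z j * G (i + 1)%Z j)
             = gint h N (fun i j => F i j * G i j)).
  { apply (gint_shift_eq N HN h _ _ 1 0); [solve_periodic | shift_arith]. }
  assert (E2 : gint h N (fun i j => F i j * G (i + 1)%Z j)
             = gint h N (fun i j => F (i - 1)%Z j * G i j)).
  { apply (gint_shift_eq N HN h _ _ 1 0); [solve_periodic | shift_arith]. }
  assert (E3 : gint h N (fun i j => F i (j + 1)%Z * G i (j + 1)%Z)
             = gint h N (fun i j => F i j * G i j)).
  { apply (gint_shift_eq N HN h _ _ 0 1); [solve_periodic | shift_arith]. }
  assert (E4 : gint h N (fun i j => F i j * G i (j + 1)%Z)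
             = gint h N (fun i j => F i (j - 1)%Z * G i j)).
  { apply (gint_shift_eq N HN h _ _ 0 1); [solve_periodic | shift_arith]. }
  rewrite (gint_ext N h _ (fun i j => / h ^ 2 * (F (i + 1)%Z j * G i j + F (i - 1)%Z j * G i j
      + F i (j + 1)%Z * G i j + F i (j - 1)%Z * G i j - 4 * (F i j * G i j))))
    by (intros; unfold Lap, Rdiv; ring).
  rewrite (gint_ext N h (fun i j => Dx h F i j * Dx h G i j + Dy h F i j * Dy h G i j)
      (fun i j => / h ^ 2 * (F (i + 1)%Z j * G (i + 1)%Z j - F (i + 1)%Z j * G i j
         - F i j * G (i + 1)%Z j + F i j * G i j + (F i (j + 1)%Z * G i (j + 1)%Z
         - F i (j + 1)%Z * G i j - F i j * G i (j + 1)%Z + F i j * G i j))))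
    by (intros; unfold Dx, Dy; field; auto).
  gint_linear. rewrite E1, E2, E3, E4. ring.
Qed.

(* The vertex difference DDx averages the two edge differences Dx around a vertex. *)
Lemma gradv2_le_gradsq f : periodic N f -> gradv2 h N f <= gradsq h N f.
Proof.
  intros Hf.
  assert (E1 : gint h N (fun i j => Dx h f i (j + 1)%Z ^ 2) = gint h N (fun i j => Dx h f i j ^ 2)).
  { apply (gint_shift_eq N HN h _ _ 0 1); [solve_periodic | shift_arith]. }
  assert (E2 : gint h N (fun i j => Dy h f (i + 1)%Z j ^ 2) = gint h N (fun i j => Dy h f i j ^ 2)).
  { apply (gint_shift_eq N HN h _ _ 1 0); [solve_periodic | shift_arith]. }
  assert (Hpt : 0 <= gint h N (fun i j => / 2 * Dx h f i (j + 1)%Z ^ 2 + / 2 * Dx h f i j ^ 2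
             + (/ 2 * Dy h f (i + 1)%Z j ^ 2 + / 2 * Dy h f i j ^ 2) - gradv_sq h f i j)).
  { apply gint_nonneg; intros i j. unfold gradv_sq.
    replace (DDx h f i j) with ((Dx h f i (j + 1)%Z + Dx h f i j) / 2)
      by (unfold DDx, Dx; field; auto).
    replace (DDy h f i j) with ((Dy h f (i + 1)%Z j + Dy h f i j) / 2)
      by (unfold DDy, Dy; field; auto).
    pose proof (pow2_ge_0 (Dx h f i (j + 1)%Z - Dx h f i j)).
    pose proof (pow2_ge_0 (Dy h f (i + 1)%Z j - Dy h f i j)).
    nra. }
  gint_linear_in Hpt. rewrite E1, E2 in Hpt.
  change (gint h N (fun i j => gradv_sq h f i j)
          <= gint h N (fun i j => Dx h f i j ^ 2 + Dy h f i j ^ 2)).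
  gint_linear. lra.
Qed.

End Summation_by_parts.

Lemma bdf2_increment_ge tau x y z : 0 < tau ->
  5 / 4 * / tau * (x - y) ^ 2 - / 4 * / tau * (y - z) ^ 2
  <= (3 * x - 4 * y + z) / (2 * tau) * (x - y).
Proof.
  intros Htau.
  assert (0 < / tau) by (apply Rinv_0_lt_compat; lra).
  assert (0 <= / tau * (x - 2 * y + z) ^ 2) by (apply Rmult_le_pos; [lra | apply pow2_ge_0]).
  unfold Rdiv. rewrite Rinv_mult. nra.
Qed.

(* Tangent-line inequality for the convex function p |-> |p|^4 / 4, whose gradient is |p|^2 p. *)
Lemma quartic_tangent_le x1 y1 x2 y2 :
  / 4 * (x1 ^ 2 + y1 ^ 2) ^ 2 + (x1 ^ 2 + y1 ^ 2) * (x1 * (x2 - x1) + y1 * (y2 - y1))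
  <= / 4 * (x2 ^ 2 + y2 ^ 2) ^ 2.
Proof.
  assert (0 <= (x1 ^ 2 + y1 ^ 2) * ((x1 - x2) ^ 2 + (y1 - y2) ^ 2)).
  { apply Rmult_le_pos; apply Rplus_le_le_0_compat; apply pow2_ge_0. }
  pose proof (pow2_ge_0 ((x1 ^ 2 + y1 ^ 2) - (x2 ^ 2 + y2 ^ 2))).
  nra.
Qed.

Lemma square_tangent_le x y : / 2 * x ^ 2 + x * (y - x) <= / 2 * y ^ 2.
Proof. pose proof (pow2_ge_0 (x - y)). nra. Qed.

Lemma extrapolation_mul_le a b c :
  (2 * b - c) * (a - b) <= / 2 * a ^ 2 - / 2 * b ^ 2 + / 2 * (b - c) ^ 2.
Proof. pose proof (pow2_ge_0 ((a - b) - (b - c))). nra. Qed.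

(* The discriminant of this quadratic form in (x, l) is 1 - 16 A. *)
Lemma stabilization_nonneg tau A x l : 0 < tau -> / 16 <= A ->
  0 <= 2 * / tau * x ^ 2 + 2 * A * tau * l ^ 2 + l * x.
Proof.
  intros Htau HA.
  replace (2 * / tau * x ^ 2 + 2 * A * tau * l ^ 2 + l * x)
    with (/ tau * (2 * (x + tau * l / 4) ^ 2 + (2 * A - / 8) * (tau * l) ^ 2)) by (field; lra).
  apply Rmult_le_pos; [left; apply Rinv_0_lt_compat; lra|].
  pose proof (pow2_ge_0 (x + tau * l / 4)). pose proof (pow2_ge_0 (tau * l)).
  nra.
Qed.

Lemma DDx_gdiff h f g i j : DDx h (gdiff f g) i j = DDx h f i j - DDx h g i j.
Proof. unfold DDx, gdiff, Rdiv. ring. Qed.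

Lemma DDy_gdiff h f g i j : DDy h (gdiff f g) i j = DDy h f i j - DDy h g i j.
Proof. unfold DDy, gdiff, Rdiv. ring. Qed.

Lemma Lap_gdiff h f g i j : Lap h (gdiff f g) i j = Lap h f i j - Lap h g i j.
Proof. unfold Lap, gdiff, Rdiv. ring. Qed.

Section Energy_estimates.

Variables (N : nat) (h : R).
Hypothesis HN : (0 < N)%nat.
Variables a b c : grid.
Hypotheses (Ha : periodic N a) (Hb : periodic N b) (Hc : periodic N c).

Lemma gint_bdf2_mul_ge tau : 0 < tau ->
  5 / 4 * / tau * norm2sq h N (gdiff a b) - / 4 * / tau * norm2sq h N (gdiff b c)
  <= gint h N (fun i j => (3 * a i j - 4 * b i j + c i j) / (2 * tau) * gdiff a b i j).
Proof.
  intros Htau.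
  assert (Hpt : 0 <= gint h N (fun i j => (3 * a i j - 4 * b i j + c i j) / (2 * tau) * gdiff a b i j
              - (5 / 4 * / tau * gdiff a b i j ^ 2 - / 4 * / tau * gdiff b c i j ^ 2))).
  { apply gint_nonneg; intros i j. unfold gdiff.
    pose proof (bdf2_increment_ge tau (a i j) (b i j) (c i j) Htau). lra. }
  gint_linear_in Hpt.
  change (norm2sq h N (gdiff a b)) with (gint h N (fun i j => gdiff a b i j ^ 2)).
  change (norm2sq h N (gdiff b c)) with (gint h N (fun i j => gdiff b c i j ^ 2)). lra.
Qed.

Lemma gint_divv_mul_le :
  gint h N (fun i j => divv h a i j * gdiff a b i j) <= / 4 * gradv4 h N b - / 4 * gradv4 h N a.
Proof.
  rewrite (gint_ext N h _ (fun i j => ddx h (fun p q => gradv_sq h a p q * DDx h a p q) i j * gdiff a b i j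
      + ddy h (fun p q => gradv_sq h a p q * DDy h a p q) i j * gdiff a b i j))
    by (intros; unfold divv; ring).
  rewrite gint_add, gint_ddx_mul, gint_ddy_mul by (auto; solve_periodic).
  assert (Hpt : 0 <= gint h N (fun i j => / 4 * gradv_sq h b i j ^ 2 - / 4 * gradv_sq h a i j ^ 2
              + (gradv_sq h a i j * DDx h a i j * DDx h (gdiff a b) i j
                 + gradv_sq h a i j * DDy h a i j * DDy h (gdiff a b) i j))).
  { apply gint_nonneg; intros i j. rewrite DDx_gdiff, DDy_gdiff. unfold gradv_sq.
    pose proof (quartic_tangent_le (DDx h a i j) (DDy h a i j) (DDx h b i j) (DDy h b i j)). lra. }
  gint_linear_in Hpt.
  change (gradv4 h N b) with (gint h N (fun i j => gradv_sq h b i j ^ 2)).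
  change (gradv4 h N a) with (gint h N (fun i j => gradv_sq h a i j ^ 2)). lra.
Qed.

Lemma gint_Lapv_mul_ge :
  - gint h N (fun i j => Lapv h (fun p q => 2 * b p q - c p q) i j * gdiff a b i j)
  <= / 2 * gradv2 h N a - / 2 * gradv2 h N b + / 2 * gradv2 h N (gdiff b c).
Proof.
  set (w := fun p q => 2 * b p q - c p q).
  rewrite (gint_ext N h _ (fun i j => ddx h (DDx h w) i j * gdiff a b i j
      + ddy h (DDy h w) i j * gdiff a b i j)) by (intros; unfold Lapv; ring).
  rewrite gint_add, gint_ddx_mul, gint_ddy_mul by (auto; unfold w; solve_periodic).
  assert (Hpt : 0 <= gint h N (fun i j => / 2 * gradv_sq h a i j - / 2 * gradv_sq h b i j
              + / 2 * gradv_sq h (gdiff b c) i j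
              - (DDx h w i j * DDx h (gdiff a b) i j + DDy h w i j * DDy h (gdiff a b) i j))).
  { apply gint_nonneg; intros i j.
    replace (DDx h w i j) with (2 * DDx h b i j - DDx h c i j) by (unfold w, DDx, Rdiv; ring).
    replace (DDy h w i j) with (2 * DDy h b i j - DDy h c i j) by (unfold w, DDy, Rdiv; ring).
    unfold gradv_sq. rewrite !DDx_gdiff, !DDy_gdiff.
    pose proof (extrapolation_mul_le (DDx h a i j) (DDx h b i j) (DDx h c i j)).
    pose proof (extrapolation_mul_le (DDy h a i j) (DDy h b i j) (DDy h c i j)). lra. }
  gint_linear_in Hpt.
  change (gradv2 h N a) with (gint h N (fun i j => gradv_sq h a i j)).
  change (gradv2 h N b) with (gint h N (fun i j => gradv_sq h b i j)).
  change (gradv2 h N (gdiff b c)) with (gint h N (fun i j => gradv_sq h (gdiff b c) i j)). lra.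
Qed.

Lemma gint_Lap2_mul_ge :
  / 2 * norm2sq h N (Lap h a) - / 2 * norm2sq h N (Lap h b)
  <= gint h N (fun i j => Lap2 h a i j * gdiff a b i j).
Proof.
  unfold Lap2. rewrite gint_Lap_mul_sym by (auto; solve_periodic).
  assert (Hpt : 0 <= gint h N (fun i j => Lap h a i j * Lap h (gdiff a b) i j
              - (/ 2 * Lap h a i j ^ 2 - / 2 * Lap h b i j ^ 2))).
  { apply gint_nonneg; intros i j. rewrite Lap_gdiff.
    pose proof (square_tangent_le (Lap h a i j) (Lap h b i j)). lra. }
  gint_linear_in Hpt.
  change (norm2sq h N (Lap h a)) with (gint h N (fun i j => Lap h a i j ^ 2)).
  change (norm2sq h N (Lap h b)) with (gint h N (fun i j => Lap h b i j ^ 2)). lra.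
Qed.

End Energy_estimates.

Lemma gradsq_le_stabilization N h tau A f : (0 < N)%nat -> h <> 0 -> 0 < tau -> / 16 <= A ->
  periodic N f ->
  gradsq h N f <= 2 * / tau * norm2sq h N f + 2 * A * tau * norm2sq h N (Lap h f).
Proof.
  intros HN Hh Htau HA Hf.
  assert (Hgreen := gint_Lap_mul N h HN Hh f f Hf Hf).
  assert (Hpt : 0 <= gint h N (fun i j => 2 * / tau * f i j ^ 2
                                         + 2 * A * tau * Lap h f i j ^ 2 + Lap h f i j * f i j)).
  { apply gint_nonneg; intros i j. apply stabilization_nonneg; assumption. }
  gint_linear_in Hpt.
  change (gint h N (fun i j => Dx h f i j ^ 2 + Dy h f i j ^ 2)
          <= 2 * / tau * gint h N (fun i j => f i j ^ 2)
             + 2 * A * tau * gint h N (fun i j => Lap h f i j ^ 2)).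
  rewrite (gint_ext N h _ (fun i j => Dx h f i j * Dx h f i j + Dy h f i j * Dy h f i j))
    by (intros; ring).
  lra.
Qed.

Lemma Ftilde_step_le N h eps tau A a b c : (0 < N)%nat -> h <> 0 -> 0 < tau -> / 16 <= A ->
  periodic N a -> periodic N b -> periodic N c -> scheme_step h eps tau A a b c ->
  Ftilde h eps tau N a b <= Ftilde h eps tau N b c.
Proof.
  intros HN Hh Htau HA Ha Hb Hc Hstep.
  assert (Htested : gint h N (fun i j => (3 * a i j - 4 * b i j + c i j) / (2 * tau) * gdiff a b i j)
    = gint h N (fun i j => divv h a i j * gdiff a b i j)
      - gint h N (fun i j => Lapv h (fun p q => 2 * b p q - c p q) i j * gdiff a b i j)
      - A * tau * gint h N (fun i j => Lap2 h (gdiff a b) i j * gdiff a b i j)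
      - eps ^ 2 * gint h N (fun i j => Lap2 h a i j * gdiff a b i j)).
  { rewrite (gint_ext N h _ (fun i j => divv h a i j * gdiff a b i j
       - Lapv h (fun p q => 2 * b p q - c p q) i j * gdiff a b i j
       - A * tau * (Lap2 h (gdiff a b) i j * gdiff a b i j)
       - eps ^ 2 * (Lap2 h a i j * gdiff a b i j))) by (intros; rewrite Hstep; ring).
    gint_linear. reflexivity. }
  assert (Hstab : gint h N (fun i j => Lap2 h (gdiff a b) i j * gdiff a b i j)
                  = norm2sq h N (Lap h (gdiff a b))).
  { unfold Lap2. rewrite gint_Lap_mul_sym by (auto; solve_periodic).
    apply gint_ext; intros; ring. }
  assert (Hbdf2 := gint_bdf2_mul_ge N h a b c tau Htau).
  assert (Hquartic := gint_divv_mul_le N h HN a b Ha Hb).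
  assert (Hexplicit := gint_Lapv_mul_ge N h HN a b c Ha Hb Hc).
  assert (Hsurface := gint_Lap2_mul_ge N h HN a b Ha Hb).
  assert (Hsurface_eps := Rmult_le_compat_l (eps ^ 2) _ _ (pow2_ge_0 eps) Hsurface).
  assert (Hincrement := gradsq_le_stabilization N h tau A (gdiff a b) HN Hh Htau HA
                          ltac:(solve_periodic)).
  assert (Hvertex := gradv2_le_gradsq N h HN Hh (gdiff b c) ltac:(solve_periodic)).
  rewrite Hstab in Htested. unfold Ftilde, Fh. rewrite !Rinv_mult. lra.
Qed.

Lemma gint_scheme_mass N h eps tau A a b c : (0 < N)%nat -> 0 < tau ->
  periodic N a -> periodic N b -> periodic N c -> scheme_step h eps tau A a b c ->
  3 * gint h N a - 4 * gint h N b + gint h N c = 0.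
Proof.
  intros HN Htau Ha Hb Hc Hstep.
  assert (Hzero : gint h N (fun i j => (3 * a i j - 4 * b i j + c i j) / (2 * tau)) = 0).
  { rewrite (gint_ext N h _ (fun i j =>
        ddx h (fun p q => gradv_sq h a p q * DDx h a p q) i j
      + ddy h (fun p q => gradv_sq h a p q * DDy h a p q) i j
      - (ddx h (DDx h (fun p q => 2 * b p q - c p q)) i j
         + ddy h (DDy h (fun p q => 2 * b p q - c p q)) i j)
      - A * tau * Lap h (Lap h (gdiff a b)) i j - eps ^ 2 * Lap h (Lap h a) i j)).
    2: { intros i j. rewrite Hstep. unfold divv, Lapv, Lap2. ring. }
    gint_linear.
    rewrite !gint_ddx, !gint_ddy, !gint_Lap by (auto; solve_periodic). ring. }
  rewrite (gint_ext N h _ (fun i j => / (2 * tau) * (3 * a i j - 4 * b i j + c i j))) in Hzero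
    by (intros; unfold Rdiv; ring).
  gint_linear_in Hzero.
  apply Rmult_integral in Hzero as [Hinv | Hmass]; [| exact Hmass].
  exfalso. apply (Rinv_neq_0_compat (2 * tau)); lra.
Qed.

Lemma Ftilde_ge N h eps tau f g : (0 < N)%nat -> 0 < tau ->
  eps ^ 2 / 2 * norm2sq h N (Lap h f) - (h * INR N) ^ 2 / 4 <= Ftilde h eps tau N f g.
Proof.
  intros HN Htau.
  assert (Hdw : 0 <= gint h N (fun i j => / 4 * gradv_sq h f i j ^ 2 - / 2 * gradv_sq h f i j + / 4)).
  { apply gint_nonneg; intros i j. pose proof (pow2_ge_0 (gradv_sq h f i j - 1)). nra. }
  gint_linear_in Hdw. rewrite gint_const in Hdw by exact HN.
  assert (Hl2 : 0 <= norm2sq h N (gdiff f g)) by (apply gint_nonneg; intros; apply pow2_ge_0).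
  assert (Hgrad : 0 <= gradsq h N (gdiff f g)).
  { apply gint_nonneg; intros; apply Rplus_le_le_0_compat; apply pow2_ge_0. }
  assert (Hl2_tau : 0 <= / (4 * tau) * norm2sq h N (gdiff f g))
    by (apply Rmult_le_pos; [left; apply Rinv_0_lt_compat|]; lra).
  unfold Ftilde, Fh.
  change (gradv4 h N f) with (gint h N (fun i j => gradv_sq h f i j ^ 2)).
  change (gradv2 h N f) with (gint h N (fun i j => gradv_sq h f i j)).
  lra.
Qed.

Section Scheme_sequence.

Variables (N : nat) (h eps tau A : R) (phi : nat -> grid).
Hypotheses (HN : (0 < N)%nat) (Htau : 0 < tau) (Hper : forall k, periodic N (phi k)).
Hypothesis Hscheme :
  forall k, (1 <= k)%nat -> scheme_step h eps tau A (phi (S k)) (phi k) (phi (k - 1)%nat).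

Lemma gint_scheme_sequence : gint h N (phi 0%nat) = 0 -> gint h N (phi 1%nat) = 0 ->
  forall k, gint h N (phi k) = 0.
Proof.
  intros H0 H1.
  assert (Hpair : forall k, gint h N (phi k) = 0 /\ gint h N (phi (S k)) = 0).
  { induction k as [|k [IH0 IH1]]; [auto|]. split; [exact IH1|].
    assert (Hrec := gint_scheme_mass N h eps tau A _ _ _ HN Htau (Hper _) (Hper _) (Hper _)
                      (Hscheme (S k) ltac:(lia))).
    replace (S k - 1)%nat with k in Hrec by lia. lra. }
  intros k. apply Hpair.
Qed.

Lemma Ftilde_scheme_sequence_le : h <> 0 -> / 16 <= A -> forall k, (1 <= k)%nat ->
  Ftilde h eps tau N (phi k) (phi (k - 1)%nat) <= Ftilde h eps tau N (phi 1%nat) (phi 0%nat).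
Proof.
  intros Hh HA k Hk.
  set (E := fun m => Ftilde h eps tau N (phi (S m)) (phi m)).
  assert (Hdecr : Un_decreasing E).
  { intros m. apply (Ftilde_step_le N h eps tau A); auto.
    replace m with (S m - 1)%nat at 3 by lia. apply Hscheme. lia. }
  destruct k as [|k]; [lia|]. replace (S k - 1)%nat with k by lia.
  exact (decreasing_prop E 0 k Hdecr (Nat.le_0_l k)).
Qed.

End Scheme_sequence.

Theorem mainTheorem8
  (L : R) (N : nat) (tau eps A C1 : R) (phi : nat -> grid)
  (HL : 0 < L) (HN : (0 < N)%nat)
  (Htau : 0 < tau) (Heps : 0 < eps) (HA : / 16 <= A)
  (Hper : forall k, periodic N (phi k))
  (Hm0 : mean L (L / INR N) N (phi 0%nat) = 0)
  (Hm1 : mean L (L / INR N) N (phi 1%nat) = 0)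
  (Hscheme : forall k, (1 <= k)%nat ->
     scheme_step (L / INR N) eps tau A (phi (S k)) (phi k) (phi (k - 1)%nat))
  (HC1 : 0 < C1)
  (HC1bound : forall psi : grid, periodic N psi -> mean L (L / INR N) N psi = 0 ->
     norm2sq (L / INR N) N (Lap (L / INR N) psi) >= C1 * H2sq (L / INR N) N psi) :
  forall k, (1 <= k)%nat ->
    H2norm (L / INR N) N (phi k)
    <= sqrt (2 * (Ftilde (L / INR N) eps tau N (phi 1%nat) (phi 0%nat) + L ^ 2) / (C1 * eps ^ 2)).
Proof.
  intros k Hk.
  assert (HNpos : 0 < INR N) by (apply lt_0_INR; lia).
  set (h := L / INR N) in *.
  assert (Hh : h <> 0) by (unfold h; apply Rgt_not_eq, Rdiv_lt_0_compat; lra).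
  assert (HhN : h * INR N = L) by (unfold h; field; lra).
  assert (HL2 : 0 < L ^ 2) by (apply pow_lt; lra).
  assert (Hmean : forall f, mean L h N f * L ^ 2 = gint h N f)
    by (intros; unfold mean, gint; field; lra).
  assert (Hmass := gint_scheme_sequence N h eps tau A phi HN Htau Hper Hscheme
                     ltac:(rewrite <- Hmean, Hm0; ring) ltac:(rewrite <- Hmean, Hm1; ring) k).
  assert (Hcoercive := HC1bound (phi k) (Hper k)
                         ltac:(apply (Rmult_eq_reg_r (L ^ 2)); [rewrite Hmean, Hmass|]; lra)).
  assert (Henergy := Ftilde_scheme_sequence_le N h eps tau A phi HN Htau Hper Hscheme Hh HA k Hk).
  assert (Hlower := Ftilde_ge N h eps tau (phi k) (phi (k - 1)%nat) HN Htau).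
  rewrite HhN in Hlower.
  assert (Heps2 : 0 < eps ^ 2) by (apply pow_lt; lra).
  unfold H2norm. apply sqrt_le_1_alt.
  apply (Rmult_le_reg_l (C1 * eps ^ 2)); [apply Rmult_lt_0_compat; lra|].
  unfold Rdiv. rewrite (Rmult_comm (2 * _)), <- Rmult_assoc, Rinv_r, Rmult_1_l
    by (apply Rgt_not_eq, Rmult_lt_0_compat; lra).
  nra.
Qed.
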